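(* Assume A1, A2, A3(D), $\beta\in[0,1)$ and $0<\eta<2N/(\sigma_{\max}^2H_{s_0})$, where $s_0=\ell^{-1}(N\mathcal{L}(w(1)))$. Let $C_1=\frac{\sigma_{\max}^2H_{s_0}}{2N}\eta\in(0,1)$. Let $w(t)$ be the GDM iterates, with the convention $w(0)=w(1)$, and define $$\xi(t)=\mathcal{L}(w(t))+\frac{\beta}{2\eta(1-\beta)}\|w(t)-w(t-1)\|^2.$$ Then for every $t\ge1$ and every $\alpha\in[0,1]$, writing $w(t+\alpha)=w(t)+\alpha(w(t+1)-w(t))$, $$\xi(t)\ge\mathcal{L}(w(t+\alpha))+\frac{\beta\alpha^2}{2\eta(1-\beta)}\|w(t+1)-w(t)\|^2+\frac{(1-C_1)\alpha^2}{\eta}\|w(t+1)-w(t)\|^2.$$ In particular, $\xi(t)\ge\xi(t+1)+\frac{1-C_1}{\eta}\|w(t+1)-w(t)\|^2$ for all $t\ge1$.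
   Context: Setting. The data are $S=\{x_1,\dots,x_N\}\subset\mathbb{R}^d$, with labels absorbed. The empirical loss is $\mathcal{L}(w)=\frac1N\sum_i\ell(\langle w,x_i\rangle)$. $\sigma_{\max}$ is the spectral norm of $(x_1,\dots,x_N)$. A1: there is $w$ with $\langle w,x_i\rangle>0$ for all $i$. A2: $\ell$ is differentiable, $\ell'<0$, $\ell(x),\ell'(x)\to0$ as $x\to\infty$, and $\limsup_{x\to-\infty}\ell'(x)<0$. There are positive $\mu_\pm,x_\pm$ with $-\ell'(x)\le(1+e^{-\mu_+x})e^{-x}$ for $x>x_+$ and $-\ell'(x)\ge(1-e^{-\mu_-x})e^{-x}$ for $x>x_-$. $\ell^{-1}$ is the inverse of the bijection $\ell:\mathbb{R}\to(0,\infty)$. A3(D): $H_{s_0}$ is the smallest constant with $|\ell'(x)-\ell'(y)|\le H_{s_0}|x-y|$ for $x,y\ge s_0$ (finite for every $s_0$). GDM: $m(0)=0$, $m(t)=\beta m(t-1)+(1-\beta)\nabla\mathcal{L}(w(t))$, $w(t+1)=w(t)-\eta m(t)$ for $t\ge1$. *)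

From HB Require Import structures.
From mathcomp Require Import all_boot all_order all_algebra.
From mathcomp Require Import all_classical all_reals all_analysis.
Set Implicit Arguments. Unset Strict Implicit. Unset Printing Implicit Defensive.
Import Order.TTheory GRing.Theory Num.Theory.
Import numFieldNormedType.Exports.
Local Open Scope classical_set_scope.
Local Open Scope ring_scope.

Section Defs.
Variable R : realType.

Definition dotp (d : nat) (u v : 'rV[R]_d) : R := \sum_(j < d) u ord0 j * v ord0 j.
Definition sqnorm (d : nat) (u : 'rV[R]_d) : R := dotp u u.

Definition emp_loss (l : R -> R) (N d : nat) (x : 'I_N -> 'rV[R]_d) (w : 'rV[R]_d) : R :=
  N%:R^-1 * \sum_(i < N) l (dotp w (x i)).

Definition emp_grad (dl : R -> R) (N d : nat) (x : 'I_N -> 'rV[R]_d) (w : 'rV[R]_d)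
  : 'rV[R]_d :=
  N%:R^-1 *: \sum_(i < N) (dl (dotp w (x i)) *: x i).

(* spectral norm of the d x N matrix (x_1, ..., x_N):
   sup { ||sum_i u_i x_i|| : u in R^N, ||u|| <= 1 } *)
Definition sigma_max (N d : nat) (x : 'I_N -> 'rV[R]_d) : R :=
  sup [set Num.sqrt (sqnorm (\sum_(i < N) u i *: x i)) |
        u in [set u : 'I_N -> R | \sum_(i < N) u i ^+ 2 <= 1]].

(* H_{s0}: smallest Lipschitz constant of dl on [s0, +oo) *)
Definition lip_const (dl : R -> R) (s0 : R) : R :=
  sup [set r : R | exists a b : R, [/\ s0 <= a, s0 <= b, a != b &
                    r = `|dl a - dl b| / `|a - b|]].
End Defs.

From HB Require Import structures.
From mathcomp Require Import all_boot all_order all_algebra.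
From mathcomp Require Import all_classical all_reals all_analysis.
From mathcomp Require Import ring lra.
Import Order.TTheory GRing.Theory Num.Theory.
Import numFieldNormedType.Exports.
Local Open Scope classical_set_scope.
Local Open Scope ring_scope.

(* Write D = w(t+1) - w(t) = beta Dp - eta (1 - beta) grad L(w(t)) with
   Dp = w(t) - w(t-1). As long as all margins <w, x_i> stay above s0, the loss
   obeys the descent lemma with constant sigma_max^2 H_{s0} / N; plugging in
   the expression of D and completing a square gives the energy inequality.
   The inequality keeps the whole segment inside the region: at the first
   parameter where a margin reaches s0 the loss is already >= L(w(1)) >= xi(t),
   which the strict decrease forbids (the degenerate case where w(t) itself is on
   the boundary forces N = 1 and D pointing inwards). Since the energy decreases,
   xi(t) <= xi(1) = L(w(1)) for all t, which is what the region argument needs. *)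

Section InnerProduct.
Context {R : realType} {d : nat}.
Implicit Types u v z : 'rV[R]_d.

Lemma dotpC u v : dotp u v = dotp v u.
Proof. by apply: eq_bigr => j _; rewrite mulrC. Qed.

Lemma dotpDl u v z : dotp (u + v) z = dotp u z + dotp v z.
Proof. by rewrite /dotp -big_split; apply: eq_bigr => j _; rewrite !mxE mulrDl. Qed.

Lemma dotpZl a u z : dotp (a *: u) z = a * dotp u z.
Proof. by rewrite /dotp mulr_sumr; apply: eq_bigr => j _; rewrite !mxE mulrA. Qed.

Lemma dotpBl u v z : dotp (u - v) z = dotp u z - dotp v z.
Proof. by rewrite dotpDl -scaleN1r dotpZl mulN1r. Qed.

Lemma dotp0l z : dotp 0 z = 0.
Proof. by rewrite -(scale0r 0) dotpZl mul0r. Qed.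

Lemma dotpBr u v z : dotp z (u - v) = dotp z u - dotp z v.
Proof. by rewrite dotpC dotpBl !(dotpC z). Qed.

Lemma dotpZr a u z : dotp z (a *: u) = a * dotp z u.
Proof. by rewrite dotpC dotpZl dotpC. Qed.

Lemma dotp_sumr (N : nat) (f : 'I_N -> 'rV[R]_d) z :
  dotp z (\sum_(i < N) f i) = \sum_(i < N) dotp z (f i).
Proof.
by rewrite /dotp exchange_big; apply: eq_bigr => j _; rewrite summxE mulr_sumr.
Qed.

Lemma sqnorm_ge0 u : 0 <= sqnorm u.
Proof. by apply: sumr_ge0 => j _; rewrite -expr2 sqr_ge0. Qed.

Lemma sqnorm_eq0 u : (sqnorm u == 0) = (u == 0).
Proof.
apply/idP/eqP => [|->]; last by rewrite /sqnorm dotp0l.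
rewrite psumr_eq0 => [/allP u0|j _]; last by rewrite -expr2 sqr_ge0.
apply/rowP => j; rewrite mxE.
by have /= := u0 j (mem_index_enum _); rewrite mulf_eq0 orbb => /eqP.
Qed.

Lemma sqnormB u v : sqnorm (u - v) = sqnorm u - 2 * dotp u v + sqnorm v.
Proof.
rewrite /sqnorm dotpBl !dotpBr (dotpC v u); ring.
Qed.

Lemma sqnormZ a u : sqnorm (a *: u) = a ^+ 2 * sqnorm u.
Proof. by rewrite /sqnorm dotpZl dotpZr mulrA expr2. Qed.

End InnerProduct.

Section SpectralNorm.
Context {R : realType} {N d : nat} (x : 'I_N -> 'rV[R]_d).

Lemma sqr_le_sum (u : 'I_N -> R) i : u i ^+ 2 <= \sum_(k < N) u k ^+ 2.
Proof. by rewrite (bigD1 i) //= lerDl sumr_ge0 // => k _; rewrite sqr_ge0. Qed.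

Lemma sqnorm_lincomb_le_unit (u : 'I_N -> R) : \sum_(i < N) u i ^+ 2 <= 1 ->
  sqnorm (\sum_(i < N) u i *: x i) <= sigma_max x ^+ 2.
Proof.
move=> u1.
have E_ub : has_ubound [set Num.sqrt (sqnorm (\sum_(i < N) v i *: x i)) |
    v in [set v : 'I_N -> R | \sum_(i < N) v i ^+ 2 <= 1]].
  exists (Num.sqrt (\sum_(j < d) (\sum_(i < N) `|x i ord0 j|) ^+ 2)).
  move=> _ [v v1 <-]; rewrite ler_sqrt; last by rewrite sumr_ge0 // => j _; rewrite sqr_ge0.
  apply: ler_sum => j _; rewrite -expr2 summxE -real_normK ?num_real //.
  have vx : `|\sum_(i < N) (v i *: x i) ord0 j| <= \sum_(i < N) `|x i ord0 j|.
    apply: le_trans (ler_norm_sum _ _ _) _; apply: ler_sum => i _.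
    rewrite mxE normrM ler_piMl // -(ler_pXn2r (n := 2)) ?nnegrE //.
    by rewrite expr1n real_normK ?num_real // (le_trans (sqr_le_sum v i)).
  by rewrite ler_pM.
have us : Num.sqrt (sqnorm (\sum_(i < N) u i *: x i)) <= sigma_max x.
  by apply: ub_le_sup => //; exists u.
have s_ge0 := le_trans (sqrtr_ge0 _) us.
by move: us; rewrite -(ler_pXn2r (n := 2)) ?nnegrE ?sqr_sqrtr ?sqnorm_ge0.
Qed.

Lemma sqnorm_lincomb_le (u : 'I_N -> R) :
  sqnorm (\sum_(i < N) u i *: x i) <= sigma_max x ^+ 2 * \sum_(i < N) u i ^+ 2.
Proof.
set q := \sum_(i < N) u i ^+ 2.
have [q0|q_gt0] := eqVneq q 0.
  have u0 i : u i = 0 by apply/eqP; rewrite -sqrf_eq0 eq_le sqr_ge0 -q0 sqr_le_sum.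
  rewrite q0 mulr0 big1 => [|i _]; first by rewrite /sqnorm dotp0l.
  by rewrite u0 scale0r.
have {}q_gt0 : 0 < q by rewrite lt_def q_gt0 sumr_ge0 // => i _; rewrite sqr_ge0.
pose r := Num.sqrt q; have r_gt0 : 0 < r by rewrite sqrtr_gt0.
have := sqnorm_lincomb_le_unit (fun i => u i / r).
have -> : \sum_(i < N) (u i / r) ^+ 2 = 1.
  under eq_bigr do rewrite expr_div_n.
  by rewrite -mulr_suml sqr_sqrtr ?divff ?gt_eqF // ltW.
have -> : \sum_(i < N) (u i / r) *: x i = r^-1 *: \sum_(i < N) u i *: x i.
  by rewrite scaler_sumr; apply: eq_bigr => i _; rewrite scalerA mulrC.
rewrite sqnormZ exprVn sqr_sqrtr ?(ltW q_gt0) // lexx => /(_ isT).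
by rewrite mulrC ler_pdivrMr.
Qed.

Lemma sum_dotp_sqr_le (D : 'rV[R]_d) : 0 < sigma_max x ^+ 2 ->
  \sum_(i < N) dotp D (x i) ^+ 2 <= sigma_max x ^+ 2 * sqnorm D.
Proof.
set lam := sigma_max x ^+ 2 => lam_gt0.
set Su := \sum_(i < N) dotp D (x i) *: x i; set S := \sum_(i < N) _.
have DSu : dotp D Su = S.
  by rewrite dotp_sumr; apply: eq_bigr => i _; rewrite dotpZr expr2.
have SuS : sqnorm Su <= lam * S := sqnorm_lincomb_le _.
(* [S = <D, Su>] and [|Su|^2 <= lam S], so expanding [0 <= |lam D - Su|^2]
   gives [lam S <= lam^2 |D|^2]. *)
have := sqnorm_ge0 (lam *: D - Su); rewrite sqnormB sqnormZ dotpZl DSu => h.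
by rewrite -(ler_pM2l lam_gt0) mulrA -expr2; lra.
Qed.

End SpectralNorm.

Lemma lip_const_lipschitz {R : realType} {dl : R -> R} {s0 : R} :
  (exists M, forall a b, s0 <= a -> s0 <= b -> `|dl a - dl b| <= M * `|a - b|) ->
  forall a b, s0 <= a -> s0 <= b -> `|dl a - dl b| <= lip_const dl s0 * `|a - b|.
Proof.
move=> [M lipM] a b sa sb; have [->|ab] := eqVneq a b.
  by rewrite !subrr normr0 mulr0.
have ab_gt0 : 0 < `|a - b| by rewrite normr_gt0 subr_eq0.
rewrite -ler_pdivrMr //; apply: ub_le_sup; last by exists a, b.
exists M => _ [a' [b' [sa' sb' ab' ->]]].
by rewrite ler_pdivrMr ?normr_gt0 ?subr_eq0 // lipM.
Qed.

Section DescentLemma.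
Context {R : realType} {l dl : R -> R} {s0 H : R}.
Hypothesis l_deriv : forall s : R, is_derive s 1 l (dl s).
Hypothesis dl_lip : forall a b, s0 <= a -> s0 <= b -> `|dl a - dl b| <= H * `|a - b|.

Lemma descent_lemma a b : s0 <= a -> s0 <= b ->
  l b <= l a + dl a * (b - a) + H / 2 * (b - a) ^+ 2.
Proof.
move=> sa sb.
(* by the Lipschitz bound, [g' = dg] is [<= 0] right of [a] and [>= 0] left
   of it, so [g] peaks at [a] *)
pose g : R -> R := l - cst (dl a) * id - cst (H / 2) * (id - cst a) ^+ 2.
pose dg s := dl s - dl a - H * (s - a).
have gE s : g s = l s - dl a * s - H / 2 * (s - a) ^+ 2 by rewrite /g exprfctE.
have g_deriv (s : R) : is_derive s 1 g (dg s).
  apply: is_derive_eq; rewrite exprfctE /= !scaler0 !addr0 subr0 expr1.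
  rewrite [_%:A]mulr1 !scaler1 /GRing.scale /= /dg.
  by have -> : (id - cst a) s = s - a by []; field.
have g_cont (u v : R) : {within `[u, v], continuous g}.
  by apply: derivable_within_continuous => s _; exact: ex_derive.
have dg_le0 c : a <= c -> dg c <= 0.
  move=> ac; have := dl_lip c a (le_trans sa ac) sa.
  rewrite (ger0_norm (x := c - a)) ?subr_ge0 // /dg.
  by have := ler_norm (dl c - dl a); lra.
have dg_ge0 c : s0 <= c -> c <= a -> 0 <= dg c.
  move=> sc ca; have := dl_lip c a sc sa.
  rewrite (ler0_norm (x := c - a)) ?subr_le0 // /dg -normrN.
  by have := ler_norm (- (dl c - dl a)); lra.
suff : g b <= g a by rewrite !gE subrr expr0n /= mulr0 subr0 mulrBr; lra.
have [ab|ba] := leP a b.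
  have [c] := MVT_segment ab (fun s _ => g_deriv s) (g_cont a b).
  rewrite in_itv /= => /andP[ac _] gba.
  by rewrite -subr_le0 gba mulr_le0_ge0 ?dg_le0 ?subr_ge0.
have [c] := MVT_segment (ltW ba) (fun s _ => g_deriv s) (g_cont b a).
rewrite in_itv /= => /andP[bc ca] gab.
by rewrite -subr_ge0 gab mulr_ge0 ?dg_ge0 ?subr_ge0 ?(le_trans sb bc) ?(ltW ba).
Qed.

End DescentLemma.

Lemma emp_loss_descent {R : realType} {N d} (x : 'I_N -> 'rV[R]_d) {l dl : R -> R}
    {s0 H : R} :
  (forall s : R, is_derive s 1 l (dl s)) ->
  (forall a b, s0 <= a -> s0 <= b -> `|dl a - dl b| <= H * `|a - b|) ->
  0 <= H -> 0 < sigma_max x ^+ 2 ->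
  forall w0 D : 'rV[R]_d,
  (forall i, s0 <= dotp w0 (x i)) -> (forall i, s0 <= dotp (w0 + D) (x i)) ->
  emp_loss l x (w0 + D) <= emp_loss l x w0 + dotp (emp_grad dl x w0) D
     + sigma_max x ^+ 2 * H / (2 * N%:R) * sqnorm D.
Proof.
move=> l_deriv dl_lip H_ge0 sigma_gt0 w0 D w0_reg wD_reg.
have sum_descent : \sum_(i < N) l (dotp (w0 + D) (x i)) <=
    \sum_(i < N) l (dotp w0 (x i)) + \sum_(i < N) dl (dotp w0 (x i)) * dotp D (x i)
    + H / 2 * (sigma_max x ^+ 2 * sqnorm D).
  have := ler_wpM2l (divr_ge0 H_ge0 (ler0n _ 2)) (sum_dotp_sqr_le x D sigma_gt0).
  suff : \sum_(i < N) l (dotp (w0 + D) (x i)) <= \sum_(i < N) l (dotp w0 (x i))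
      + \sum_(i < N) dl (dotp w0 (x i)) * dotp D (x i)
      + H / 2 * \sum_(i < N) dotp D (x i) ^+ 2 by lra.
  rewrite mulr_sumr -!big_split /=; apply: ler_sum => i _.
  have := descent_lemma l_deriv dl_lip _ _ (w0_reg i) (wD_reg i).
  by rewrite dotpDl [_ + dotp D _]addrC addrK.
have -> : dotp (emp_grad dl x w0) D =
    N%:R^-1 * \sum_(i < N) dl (dotp w0 (x i)) * dotp D (x i).
  rewrite dotpC dotpZr dotp_sumr; congr (_ * _).
  by apply: eq_bigr => i _; rewrite dotpZr.
have N_inv_ge0 : 0 <= (N%:R : R)^-1 by rewrite invr_ge0.
have := ler_wpM2l N_inv_ge0 sum_descent.
by rewrite /emp_loss invfM !mulrDr; lra.
Qed.

(* The slack is [(b |Dp - al D|^2 + 2 al (1 - al) |D|^2) / (2 e (1 - b))]. *)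
Lemma heavy_ball_energy_ineq {R : realType} {d} {b e al : R} {Dp g D : 'rV[R]_d} :
  0 <= b < 1 -> 0 < e -> 0 <= al <= 1 -> D = b *: Dp - (e * (1 - b)) *: g ->
  al * dotp g D + b * al ^+ 2 / (2 * e * (1 - b)) * sqnorm D
    + al ^+ 2 / e * sqnorm D <= b / (2 * e * (1 - b)) * sqnorm Dp.
Proof.
move=> /andP[b0 b1] e_gt0 /andP[al0 al1] D_def.
have gD : dotp g D = (b * dotp Dp D - sqnorm D) / (e * (1 - b)).
  by rewrite /sqnorm {3}D_def dotpBl !dotpZl; field; rewrite subr_eq0 !gt_eqF.
have Q := sqnorm_ge0 (Dp - al *: D); rewrite sqnormB sqnormZ dotpZr in Q.
rewrite -subr_ge0.
have -> : b / (2 * e * (1 - b)) * sqnorm Dp - (al * dotp g D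
    + b * al ^+ 2 / (2 * e * (1 - b)) * sqnorm D + al ^+ 2 / e * sqnorm D)
  = (b * (sqnorm Dp - 2 * (al * dotp Dp D) + al ^+ 2 * sqnorm D)
     + 2 * (al * (1 - al)) * sqnorm D) / (2 * (e * (1 - b))).
  by rewrite gD; field; rewrite subr_eq0 !gt_eqF.
by rewrite divr_ge0 ?addr_ge0 ?mulr_ge0 ?subr_ge0 ?sqnorm_ge0 ?ler0n ?(ltW b1) ?(ltW e_gt0).
Qed.

Lemma first_exit {R : realType} {N} {m dd : 'I_N -> R} {s0 al : R} :
  0 <= al -> (forall j, s0 <= m j) -> (exists i, m i + al * dd i < s0) ->
  exists rs i, [/\ 0 <= rs < al, dd i < 0, m i + rs * dd i = s0
                 & forall j, s0 <= m j + rs * dd j].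
Proof.
move=> al0 m_ge [i exit_i].
have dd_i : dd i < 0.
  by rewrite ltNge; apply: contraTN exit_i => dd_i; rewrite -leNgt ler_wpDr ?mulr_ge0.
pose r j := (m j - s0) / - dd j.
have [k dd_k r_min] := @arg_minP _ _ _ i [pred j | dd j < 0] r dd_i.
have dd_kN : 0 < - dd k by rewrite oppr_gt0.
have rk_ge0 : 0 <= r k by rewrite divr_ge0 ?subr_ge0 ?m_ge ?(ltW dd_kN).
exists (r k), k; split => //.
- rewrite rk_ge0 /=; apply: le_lt_trans (r_min i dd_i) _.
  by rewrite /r ltr_pdivrMr ?oppr_gt0 //; lra.
- by rewrite /r; field; rewrite lt_eqF.
move=> j; have [dd_j|dd_j] := ltP (dd j) 0.
  by have := r_min j dd_j; rewrite {2}/r ler_pdivlMr ?oppr_gt0 //; lra.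
by have := m_ge j; have := mulr_ge0 rk_ge0 dd_j; lra.
Qed.

Lemma stepsize_facts {R : realFieldType} {n S H eta : R} :
  0 <= n -> 0 <= S -> 0 < eta < 2 * n / (S * H) ->
  [/\ 0 < n, 0 < S, 0 < H & S * H / (2 * n) * eta < 1].
Proof.
move=> n_ge0 S_ge0 /andP[eta_gt0 eta_lt].
have bound_gt0 := lt_trans eta_gt0 eta_lt.
have SH_gt0 : 0 < S * H.
  rewrite ltNge; apply: contraTN bound_gt0 => SH_le0.
  by rewrite -leNgt mulr_ge0_le0 ?invr_le0 ?mulr_ge0.
have n_gt0 : 0 < n.
  by rewrite lt_def n_ge0 andbT; apply: contraTneq bound_gt0 => ->; rewrite mulr0 mul0r ltxx.
have S_gt0 : 0 < S.
  by rewrite lt_def S_ge0 andbT; apply: contraTneq SH_gt0 => ->; rewrite mul0r ltxx.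
have H_gt0 : 0 < H by rewrite -(pmulr_rgt0 H S_gt0).
have k_gt0 : 0 < S * H / (2 * n) by rewrite divr_gt0 ?mulr_gt0.
split => //.
have : S * H / (2 * n) * eta < S * H / (2 * n) * (S * H / (2 * n))^-1.
  by rewrite ltr_pM2l // invf_div.
by rewrite mulfV // lt0r_neq0.
Qed.

Lemma gdm_increment {R : realType} {d} (beta eta : R) (g w m : nat -> 'rV[R]_d) :
  m 0%N = 0 -> w 0%N = w 1%N ->
  (forall t, (1 <= t)%N -> m t = beta *: m t.-1 + (1 - beta) *: g t) ->
  (forall t, (1 <= t)%N -> w t.+1 = w t - eta *: m t) ->
  forall t, (1 <= t)%N ->
  w t.+1 - w t = beta *: (w t - w t.-1) - (eta * (1 - beta)) *: g t.
Proof.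
move=> m0 w0 m_rec w_rec t t_ge1.
have -> : w t - w t.-1 = - eta *: m t.-1.
  case: t t_ge1 => [//|[_|t _]]; first by rewrite w0 m0 subrr scaler0.
  by rewrite w_rec // addrAC subrr add0r scaleNr.
by rewrite w_rec // m_rec //; apply/rowP => j; rewrite !mxE; ring.
Qed.

Section HeavyBallStep.
Context {R : realType} {N d : nat} (x : 'I_N -> 'rV[R]_d) {l dl : R -> R}.
Hypothesis l_deriv : forall s : R, is_derive s 1 l (dl s).
Hypothesis dl_lt0 : forall s, dl s < 0.
Hypothesis l_cvg0 : l s @[s --> +oo] --> 0.

Lemma l_decreasing : {homo l : a b /~ a < b}.
Proof.
move=> b a ab.
have l_cont : {within `[a, b], continuous l}.
  by apply: derivable_within_continuous => s _; exact: ex_derive.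
have [c _ lba] := MVT ab (fun s _ => l_deriv s) l_cont.
by rewrite -subr_lt0 lba pmulr_llt0 // subr_gt0.
Qed.

Lemma l_gt0 s : 0 < l s.
Proof.
rewrite ltNge; apply/negP => ls_le0.
have l1_lt0 : l (s + 1) < 0.
  by apply: lt_le_trans ls_le0; apply: l_decreasing; rewrite ltrDl.
have [t [l1t s1t]] : exists t, l (s + 1) <= l t /\ s + 1 < t.
  have [M [_ lM]] := cvgr_ge _ l_cvg0 _ l1_lt0.
  pose t := Num.max M (s + 1) + 1.
  have [Mt st] : M < t /\ s + 1 < t by split; rewrite ltr_pwDr // le_max lexx ?orbT.
  by exists t; split => //; exact: lM.
by have := l_decreasing _ _ s1t; lra.
Qed.

Lemma mul_emp_loss v : N%:R * emp_loss l x v = \sum_(i < N) l (dotp v (x i)).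
Proof.
rewrite /emp_loss mulrA; have [N0|N_gt0] := posnP N.
  by subst N; rewrite big_ord0 mulr0.
by rewrite mulfV ?mul1r // pnatr_eq0 -lt0n.
Qed.

Lemma l_margin_le_loss v i : l (dotp v (x i)) <= N%:R * emp_loss l x v.
Proof.
rewrite mul_emp_loss (bigD1 i) //= lerDl.
by apply: sumr_ge0 => j _; exact: ltW (l_gt0 _).
Qed.

Variables (s0 H beta eta L1 : R).
Hypothesis dl_lip : forall a b, s0 <= a -> s0 <= b -> `|dl a - dl b| <= H * `|a - b|.
Hypothesis H_ge0 : 0 <= H.
Hypothesis sigma_gt0 : 0 < sigma_max x ^+ 2.
Hypothesis beta01 : 0 <= beta < 1.
Hypothesis eta_gt0 : 0 < eta.
Hypothesis C1_lt1 : sigma_max x ^+ 2 * H / (2 * N%:R) * eta < 1.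
Hypothesis l_s0 : l s0 = N%:R * L1.

Local Notation C1 := (sigma_max x ^+ 2 * H / (2 * N%:R) * eta).
Local Notation c := (beta / (2 * eta * (1 - beta))).

Lemma energy_coef_ge0 : 0 <= c.
Proof.
have [b0 b1] := andP beta01.
by rewrite divr_ge0 // ltW // !mulr_gt0 // subr_gt0.
Qed.

Lemma margin_ge_of_loss_le v : emp_loss l x v <= L1 -> forall i, s0 <= dotp v (x i).
Proof.
move=> vL i; rewrite leNgt; apply/negP => /l_decreasing.
rewrite l_s0 => /lt_le_trans /(_ (l_margin_le_loss v i)).
have N_gt0 : (0 < N)%N := leq_ltn_trans (leq0n i) (ltn_ord i).
by rewrite ltr_pM2l ?ltr0n // ltNge vL.
Qed.

Variables (w0 Dp D : 'rV[R]_d).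
Hypothesis D_def : D = beta *: Dp - (eta * (1 - beta)) *: emp_grad dl x w0.

Lemma energy_descent_in_region (al : R) : 0 <= al <= 1 ->
  (forall i, s0 <= dotp w0 (x i)) -> (forall i, s0 <= dotp (w0 + al *: D) (x i)) ->
  emp_loss l x (w0 + al *: D) + beta * al ^+ 2 / (2 * eta * (1 - beta)) * sqnorm D
    + (1 - C1) * al ^+ 2 / eta * sqnorm D <= emp_loss l x w0 + c * sqnorm Dp.
Proof.
move=> al01 w0_reg wD_reg.
have := emp_loss_descent x l_deriv dl_lip H_ge0 sigma_gt0 _ _ w0_reg wD_reg.
rewrite dotpZr sqnormZ.
have := heavy_ball_energy_ineq beta01 eta_gt0 al01 D_def.
have -> : forall k, (1 - k * eta) * al ^+ 2 / eta * sqnorm D =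
    al ^+ 2 / eta * sqnorm D - k * (al ^+ 2 * sqnorm D).
  by move=> k; field; rewrite gt_eqF.
lra.
Qed.

Hypothesis energy_le : emp_loss l x w0 + c * sqnorm Dp <= L1.

Lemma margin_boundary_nondecreasing i :
  dotp w0 (x i) = s0 -> 0 <= dotp D (x i).
Proof.
move=> w0i.
have b1 := (andP beta01).2.
have cB_ge0 : 0 <= c * sqnorm Dp by rewrite mulr_ge0 ?energy_coef_ge0 ?sqnorm_ge0.
(* at the boundary [N L(w0) >= l(s0) = N L1], so all the slack in [energy_le] vanishes *)
have : N%:R * (emp_loss l x w0 + c * sqnorm Dp) <= l (dotp w0 (x i)).
  by rewrite w0i l_s0 ler_wpM2l.
rewrite mulrDr mul_emp_loss (bigD1 i) //= -addrA gerDl => slack_le0.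
have rest_ge0 : 0 <= \sum_(j < N | j != i) l (dotp w0 (x j)).
  by apply: sumr_ge0 => j _; exact: ltW (l_gt0 _).
have single j : j = i.
  apply/eqP; apply: contraT => ji.
  have : l (dotp w0 (x j)) <= \sum_(k < N | k != i) l (dotp w0 (x k)).
    rewrite (bigD1 j) //= lerDl; apply: sumr_ge0 => k _; exact: ltW (l_gt0 _).
  by have := l_gt0 (dotp w0 (x j)); have := mulr_ge0 (ler0n R N) cB_ge0; lra.
have N_gt0 : 0 < N%:R :> R by rewrite ltr0n (leq_ltn_trans (leq0n i) (ltn_ord i)).
have cB0 : c * sqnorm Dp = 0.
  apply/eqP; rewrite eq_le cB_ge0 andbT -(pmulr_rle0 _ N_gt0); lra.
have beta_Dp : beta * dotp Dp (x i) = 0.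
  move/eqP: cB0; rewrite !mulf_eq0 invr_eq0 sqnorm_eq0 => /orP[/orP[/eqP->|]|/eqP->].
  - by rewrite mul0r.
  - by rewrite !mulf_eq0 (gt_eqF eta_gt0) subr_eq0 (gt_eqF b1) !orbF pnatr_eq0.
  - by rewrite dotp0l mulr0.
have g_xi : dotp (emp_grad dl x w0) (x i) <= 0.
  rewrite dotpC dotpZr dotp_sumr mulr_ge0_le0 ?invr_ge0 //.
  apply: sumr_le0 => j _; rewrite dotpZr (single j) w0i.
  exact: mulr_le0_ge0 (ltW (dl_lt0 _)) (sqnorm_ge0 _).
rewrite D_def dotpBl dotpZl beta_Dp sub0r dotpZl -mulNr mulr_le0 //.
by rewrite oppr_le0 mulr_ge0 ?subr_ge0 ?ltW.
Qed.

Lemma segment_in_region (al : R) : 0 <= al <= 1 ->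
  forall i, s0 <= dotp (w0 + al *: D) (x i).
Proof.
move=> /andP[al0 al1] i; rewrite leNgt; apply/negP => exit_i.
have margin_affine r j : dotp (w0 + r *: D) (x j) = dotp w0 (x j) + r * dotp D (x j).
  by rewrite dotpDl dotpZl.
have w0_reg : forall j, s0 <= dotp w0 (x j).
  apply: margin_ge_of_loss_le; apply: le_trans energy_le; rewrite lerDl.
  by rewrite mulr_ge0 ?energy_coef_ge0 ?sqnorm_ge0.
have exit_ex : exists j, dotp w0 (x j) + al * dotp D (x j) < s0.
  by exists i; rewrite -margin_affine.
have [r [k [/andP[r0 r_al] Dk_lt0 exit_k r_reg]]] := first_exit al0 w0_reg exit_ex.
have [r_eq0|r_gt0] := eqVneq r 0.
  have : dotp w0 (x k) = s0 by rewrite -exit_k r_eq0 mul0r addr0.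
  by move/margin_boundary_nondecreasing; rewrite leNgt Dk_lt0.
(* leaving the sublevel set at [r > 0] would decrease the energy strictly below [L1] *)
have r01 : 0 <= r <= 1 by rewrite r0 (le_trans (ltW r_al)).
have wr_reg j : s0 <= dotp (w0 + r *: D) (x j) by rewrite margin_affine.
have := energy_descent_in_region _ r01 w0_reg wr_reg.
have N_gt0 : 0 < N%:R :> R by rewrite ltr0n (leq_ltn_trans (leq0n k) (ltn_ord k)).
have : L1 <= emp_loss l x (w0 + r *: D).
  rewrite -(ler_pM2l N_gt0) -l_s0 -exit_k -margin_affine; exact: l_margin_le_loss.
have A_gt0 : 0 < sqnorm D.
  rewrite lt_def sqnorm_ge0 sqnorm_eq0 andbT; apply: contraTneq Dk_lt0 => ->.
  by rewrite dotp0l ltxx.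
have : 0 < (1 - C1) * r ^+ 2 / eta * sqnorm D.
  by rewrite !mulr_gt0 ?invr_gt0 ?subr_gt0 ?exprn_gt0 // lt_def r_gt0.
have : 0 <= beta * r ^+ 2 / (2 * eta * (1 - beta)) * sqnorm D.
  by rewrite [beta * _ / _]mulrAC mulr_ge0 ?sqnorm_ge0 // mulr_ge0 ?energy_coef_ge0 // exprn_ge0.
move: energy_le; set P := (1 - C1) * _ / _ * _; set Q := beta * _ / _ * _; lra.
Qed.

Lemma energy_descent (al : R) : 0 <= al <= 1 ->
  emp_loss l x (w0 + al *: D) + beta * al ^+ 2 / (2 * eta * (1 - beta)) * sqnorm D
    + (1 - C1) * al ^+ 2 / eta * sqnorm D <= emp_loss l x w0 + c * sqnorm Dp.
Proof.
move=> al01; apply: energy_descent_in_region => //; last exact: segment_in_region.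
by move=> i; have := @segment_in_region 0 _ i; rewrite scale0r addr0 lexx ler01; apply.
Qed.

End HeavyBallStep.

Theorem lemma1 (R : realType) (N d : nat) (x : 'I_N -> 'rV[R]_d)
  (l dl : R -> R)
  (* A1: linear separability *)
  (A1 : exists w : 'rV[R]_d, forall i, 0 < dotp w (x i))
  (* A2 *)
  (Hder : forall s : R, is_derive s 1 l (dl s))
  (Hneg : forall s : R, dl s < 0)
  (Hl_inf : l s @[s --> +oo] --> 0)
  (Hdl_inf : dl s @[s --> +oo] --> 0)
  (Hlimsup : exists c : R, c < 0 /\ \forall s \near -oo, dl s <= c)
  (Htail_up : exists mup xp : R, [/\ 0 < mup, 0 < xp &
       forall s, xp < s -> - dl s <= (1 + expR (- (mup * s))) * expR (- s)])
  (Htail_lo : exists mum xm : R, [/\ 0 < mum, 0 < xm &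
       forall s, xm < s -> (1 - expR (- (mum * s))) * expR (- s) <= - dl s])
  (* A3(D): dl is Lipschitz on every [s, +oo) *)
  (A3 : forall s : R, exists M : R, forall a b : R, s <= a -> s <= b ->
          `|dl a - dl b| <= M * `|a - b|)
  (beta eta : R) (Hbeta : 0 <= beta < 1)
  (* GDM iterates, with w 0 = w 1 *)
  (w m : nat -> 'rV[R]_d)
  (Hm0 : m 0%N = 0) (Hw0 : w 0%N = w 1%N)
  (Hm : forall t : nat, (1 <= t)%N ->
          m t = beta *: m t.-1 + (1 - beta) *: emp_grad dl x (w t))
  (Hw : forall t : nat, (1 <= t)%N -> w t.+1 = w t - eta *: m t)
  (* s0 = l^{-1}(N L(w(1))) *)
  (s0 : R) (Hs0 : l s0 = N%:R * emp_loss l x (w 1%N))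
  (Heta : 0 < eta < 2 * N%:R / (sigma_max x ^+ 2 * lip_const dl s0)) :
  let C1 := sigma_max x ^+ 2 * lip_const dl s0 / (2 * N%:R) * eta in
  let xi := fun t : nat => emp_loss l x (w t)
              + beta / (2 * eta * (1 - beta)) * sqnorm (w t - w t.-1) in
  (forall t : nat, (1 <= t)%N -> forall alpha : R, 0 <= alpha <= 1 ->
     emp_loss l x (w t + alpha *: (w t.+1 - w t))
       + beta * alpha ^+ 2 / (2 * eta * (1 - beta)) * sqnorm (w t.+1 - w t)
       + (1 - C1) * alpha ^+ 2 / eta * sqnorm (w t.+1 - w t)
     <= xi t)
  /\
  (forall t : nat, (1 <= t)%N ->
     xi t.+1 + (1 - C1) / eta * sqnorm (w t.+1 - w t) <= xi t).
Proof.
move=> C1 xi.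
have [_ sigma_gt0 H_gt0 C1_lt1] := stepsize_facts (ler0n R N) (sqr_ge0 (sigma_max x)) Heta.
have incr := gdm_increment beta eta (fun t => emp_grad dl x (w t)) w m Hm0 Hw0 Hm Hw.
have step t (t_ge1 : (1 <= t)%N) (xi_le : xi t <= emp_loss l x (w 1%N)) :=
  energy_descent x Hder Hneg Hl_inf _ _ _ _ _ (lip_const_lipschitz (A3 s0)) (ltW H_gt0)
    sigma_gt0 Hbeta (andP Heta).1 C1_lt1 Hs0 _ _ _ (incr t t_ge1) xi_le.
have descent t : (1 <= t)%N -> xi t <= emp_loss l x (w 1%N) ->
    xi t.+1 + (1 - C1) / eta * sqnorm (w t.+1 - w t) <= xi t.
  move=> t_ge1 xi_le; have := step t t_ge1 xi_le 1; rewrite lexx ler01 => /(_ isT).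
  by rewrite scale1r [w t + _]addrC subrK expr1n !mulr1 /xi /C1 /=; lra.
have bounded t : (1 <= t)%N -> xi t <= emp_loss l x (w 1%N).
  elim: t => [//|[_|t IH] _]; first by rewrite /xi /= Hw0 subrr /sqnorm dotp0l mulr0 addr0.
  have : 0 <= (1 - C1) / eta * sqnorm (w t.+2 - w t.+1).
    by rewrite mulr_ge0 ?sqnorm_ge0 // divr_ge0 ?subr_ge0 ?(ltW C1_lt1) ?(ltW (andP Heta).1).
  by have := descent t.+1 isT (IH isT); have := IH isT; lra.
by split => t t_ge1; [exact: step (bounded t t_ge1) | exact: descent (bounded t t_ge1)].
Qed.
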